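(* Let $(V,g)$ be a three-dimensional Lorentzian vector space (signature $(-,+,+)$) with a choice of time orientation, and let $F\in\mathrm{Skew}(V)$, $F\neq0$. Set $\sigma:=-\frac12\mathrm{Tr}(F^2)\in\mathbb{R}$. Then there exists an orthonormal basis $\{e_0,e_1,e_2\}$ of $V$ with $e_0$ timelike and future directed such that $$F(e_0)=\left(-1+\tfrac{\sigma}{4}\right)e_2,\quad F(e_1)=-\left(1+\tfrac{\sigma}{4}\right)e_2,\quad F(e_2)=\left(-1+\tfrac{\sigma}{4}\right)e_0+\left(1+\tfrac{\sigma}{4}\right)e_1.$$
   Context: $\mathrm{Skew}(V)$ denotes the set of endomorphisms $F:V\to V$ with $\langle e,F(e')\rangle=-\langle F(e),e'\rangle$ for all $e,e'\in V$, where $\langle\cdot,\cdot\rangle$ is the inner product of $g$. *)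

(* V = column vectors 'cV[R]_3 (every 3-dim real vector space),
   with an arbitrary symmetric bilinear form g given by a Gram matrix G. *)
From HB Require Import structures.
From mathcomp Require Import all_boot all_order all_algebra.
From mathcomp Require Import reals.
Set Implicit Arguments. Unset Strict Implicit. Unset Printing Implicit Defensive.
Import Order.TTheory GRing.Theory Num.Theory.
Local Open Scope ring_scope.

Definition gform (R : realType) (G : 'M[R]_3) (u v : 'cV[R]_3) : R :=
  (u^T *m G *m v) 0 0.

Definition eta (R : realType) (i j : 'I_3) : R :=
  if i == j then (if i == 0 then -1 else 1) else 0.

Definition orthonormal_basis (R : realType) (G : 'M[R]_3) (e : 'I_3 -> 'cV[R]_3) :=
  (\matrix_(i < 3, j < 3) e j i 0) \in unitmx /\
  forall i j, gform G (e i) (e j) = eta R i j.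

Definition lorentzian3 (R : realType) (G : 'M[R]_3) :=
  G^T = G /\ exists e, orthonormal_basis G e.

Definition timelike (R : realType) (G : 'M[R]_3) (v : 'cV[R]_3) := gform G v v < 0.

(* a time orientation is given by a timelike vector tau; a timelike v is
   future directed iff it lies in the same cone as tau, i.e. g(v,tau) < 0 *)
Definition future_directed (R : realType) (G : 'M[R]_3) (tau v : 'cV[R]_3) :=
  timelike G v /\ gform G v tau < 0.

Definition skew_op (R : realType) (G : 'M[R]_3) (F : 'M[R]_3) :=
  forall u v : 'cV[R]_3, gform G u (F *m v) = - gform G (F *m u) v.

(* A skew endomorphism F of a three-dimensional Lorentzian space satisfies
   F^3 = -sigma F.  Pick a null vector u with g(Fu, Fu) = k^2 > 0; in an
   orthonormal basis one of e0 +- e1, e0 +- e2 works as soon as F <> 0.  On the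
   Krylov vectors u, Fu, F^2 u the Gram matrix of g is
   k^2 [[0, 0, -1], [0, 1, 0], [-1, 0, sigma]] and F acts by u -> Fu -> F^2 u,
   F^3 u = -sigma Fu.  Hence (4 + sigma) u + 2 F^2 u, (4 - sigma) u - 2 F^2 u and
   -4 Fu are g-orthogonal, of squared norms -16k^2, 16k^2, 16k^2, and F acts on
   them by the stated formulas.  Scaling all three by +-1/(4k), with the sign
   that puts the first one in the time cone of tau, gives the basis. *)

From Pilot Require Import Defs.
From HB Require Import structures.
From mathcomp Require Import all_boot all_order all_algebra.
From mathcomp Require Import reals.
From mathcomp Require Import ring lra.
Import Order.TTheory GRing.Theory Num.Theory.
Local Open Scope ring_scope.
Set Implicit Arguments. Unset Strict Implicit.

Lemma sum3E (R : nmodType) (f : 'I_3 -> R) : \sum_(i < 3) f i = f 0 + f 1 + f 2.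
Proof.
rewrite !big_ord_recl big_ord0 addr0 addrA.
by congr (f _ + f _ + f _); apply/val_inj.
Qed.

Lemma ord3P (i : 'I_3) : [\/ i = 0, i = 1 | i = 2].
Proof.
by case: i => [[|[|[|//]]] i_lt3]; [apply: Or31 | apply: Or32 | apply: Or33]; apply/val_inj.
Qed.

Section Gform.
Variables (R : realType) (G : 'M[R]_3).

Lemma gformDl u v w : gform G (u + v) w = gform G u w + gform G v w.
Proof. by rewrite /gform linearD !mulmxDl mxE. Qed.
Lemma gformDr u v w : gform G u (v + w) = gform G u v + gform G u w.
Proof. by rewrite /gform mulmxDr mxE. Qed.
Lemma gformZl a u v : gform G (a *: u) v = a * gform G u v.
Proof. by rewrite /gform linearZ /= -!scalemxAl mxE. Qed.
Lemma gformZr a u v : gform G u (a *: v) = a * gform G u v.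
Proof. by rewrite /gform -scalemxAr mxE. Qed.
Lemma gformC u v : G^T = G -> gform G u v = gform G v u.
Proof.
move=> GT; rewrite /gform.
have trE (A : 'M[R]_1) : A 0 0 = A^T 0 0 by rewrite mxE.
by rewrite [RHS]trE !trmx_mul !trmxK GT mulmxA.
Qed.
End Gform.

Lemma exists_normalizing_scale (R : rcfType) (a w : R) :
  0 < a -> w != 0 -> exists2 mu : R, mu ^+ 2 * a = 1 & mu * w < 0.
Proof.
move=> a_gt0 w_neq0; have sqrt_gt0 : 0 < Num.sqrt a by rewrite sqrtr_gt0.
exists (- Num.sg w / Num.sqrt a).
  rewrite expr_div_n sqrrN sqr_sg w_neq0 sqr_sqrtr ?ltW // mul1r mulVf //.
  by rewrite gt_eqF.
by rewrite mulrAC mulNr -normrEsg mulNr oppr_lt0 divr_gt0 ?normr_gt0.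
Qed.

Lemma gform_skew_self (R : realType) (G F : 'M[R]_3) x :
  G^T = G -> skew_op G F -> gform G x (F *m x) = 0.
Proof.
move=> G_sym F_skew; apply/eqP; rewrite -[_ == 0](@mulrn_eq0 _ _ 2) mulr2n.
by rewrite [X in _ + X]F_skew [gform G (F *m x) x]gformC // subrr.
Qed.

Section KrylovFrame.
Variables (R : realType) (G F : 'M[R]_3) (sigma : R) (u : 'cV[R]_3).
Hypotheses (G_sym : G^T = G) (F_skew : skew_op G F).
Hypotheses (F_cube : F *m F *m F = - sigma *: F) (u_null : gform G u u = 0).

Local Notation K := (gform G (F *m u) (F *m u)).

Definition krylov (a b c : R) : 'cV[R]_3 := a *: u + b *: (F *m u) + c *: (F *m (F *m u)).

Lemma krylovD a b c a' b' c' :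
  krylov a b c + krylov a' b' c' = krylov (a + a') (b + b') (c + c').
Proof. by apply/matrixP => i j; rewrite !mxE; ring. Qed.

Lemma krylovZ mu a b c : mu *: krylov a b c = krylov (mu * a) (mu * b) (mu * c).
Proof. by apply/matrixP => i j; rewrite !mxE; ring. Qed.

Let F3u : F *m (F *m (F *m u)) = - sigma *: (F *m u).
Proof. by rewrite !mulmxA F_cube scalemxAl. Qed.

Lemma mul_krylov a b c : F *m krylov a b c = krylov 0 (a - sigma * c) b.
Proof.
rewrite /krylov !mulmxDr -!scalemxAr F3u.
by apply/matrixP => i j; rewrite !mxE; ring.
Qed.

Lemma gform_krylov a b c a' b' c' :
  gform G (krylov a b c) (krylov a' b' c') =
  K * (b * b' - a * c' - c * a' + sigma * c * c').
Proof.
have uFu : gform G u (F *m u) = 0 by apply: gform_skew_self.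
have FuF2u : gform G (F *m u) (F *m (F *m u)) = 0 by apply: gform_skew_self.
have uF2u : gform G u (F *m (F *m u)) = - K by rewrite F_skew.
have F2uF2u : gform G (F *m (F *m u)) (F *m (F *m u)) = sigma * K.
  by rewrite [LHS]F_skew gformC // F3u gformZr mulNr opprK.
rewrite /krylov !gformDl !gformDr !gformZl !gformZr.
rewrite [gform G (F *m u) u]gformC // [gform G (F *m (F *m u)) u]gformC //.
rewrite [gform G (F *m (F *m u)) (F *m u)]gformC //.
rewrite u_null uFu FuF2u uF2u F2uF2u; ring.
Qed.

Definition normal_frame (mu : R) (i : 'I_3) : 'cV[R]_3 :=
  nth 0 [:: krylov (mu * (4 + sigma)) 0 (mu * 2);
            krylov (mu * (4 - sigma)) 0 (mu * -2);
            krylov 0 (mu * -4) 0] i.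

Lemma gform_normal_frame mu i j :
  gform G (normal_frame mu i) (normal_frame mu j) = mu ^+ 2 * (16 * K) * Defs.eta R i j.
Proof.
by case: (ord3P i) => ->; case: (ord3P j) => ->; rewrite /= gform_krylov /Defs.eta /=; ring.
Qed.

Lemma mul_normal_frame mu :
  [/\ F *m normal_frame mu 0 = (-1 + sigma / 4) *: normal_frame mu 2,
      F *m normal_frame mu 1 = - (1 + sigma / 4) *: normal_frame mu 2 &
      F *m normal_frame mu 2 =
        (-1 + sigma / 4) *: normal_frame mu 0 + (1 + sigma / 4) *: normal_frame mu 1].
Proof.
rewrite /= !mul_krylov !krylovZ krylovD.
by split; congr krylov; field.
Qed.

Lemma gform_normal_frame0 mu x :
  gform G (normal_frame mu 0) x = mu * gform G (normal_frame 1 0) x.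
Proof. by rewrite -gformZl /normal_frame /= krylovZ !mul1r mulr0. Qed.
End KrylovFrame.

Section Minkowski.
Variable R : realType.

Definition eta_mx : 'M[R]_3 := \matrix_(i, j) Defs.eta R i j.

Lemma eta_mx_sqr : eta_mx *m eta_mx = 1%:M.
Proof.
apply/matrixP => i j; rewrite !mxE sum3E !mxE.
by case: (ord3P i) => ->; case: (ord3P j) => ->; rewrite /Defs.eta /=; ring.
Qed.

Lemma gform_etaE x y :
  gform eta_mx x y = - (x 0 0 * y 0 0) + x 1 0 * y 1 0 + x 2 0 * y 2 0.
Proof. by rewrite /gform !mxE sum3E !mxE !sum3E !mxE /Defs.eta /=; ring. Qed.

Lemma eta_timelike_gform_neq0 x y :
  gform eta_mx x x < 0 -> gform eta_mx y y < 0 -> gform eta_mx x y != 0.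
Proof.
rewrite !gform_etaE; move: (x 0 0) (x 1 0) (x 2 0) (y 0 0) (y 1 0) (y 2 0).
move=> a b c d e f x_tl y_tl; apply/eqP => xy0.
have lagrange : (b * e + c * f) ^+ 2 <= (b ^+ 2 + c ^+ 2) * (e ^+ 2 + f ^+ 2).
  have : 0 <= (b * f - c * e) ^+ 2 by apply: sqr_ge0.
  lra.
have : (b ^+ 2 + c ^+ 2) * (e ^+ 2 + f ^+ 2) < a ^+ 2 * d ^+ 2.
  have : 0 <= (a ^+ 2 - b ^+ 2 - c ^+ 2) * (e ^+ 2 + f ^+ 2) by nra.
  have : 0 < a ^+ 2 * (d ^+ 2 - e ^+ 2 - f ^+ 2) by nra.
  lra.
have -> : a ^+ 2 * d ^+ 2 = (b * e + c * f) ^+ 2 by rewrite -exprMn; congr (_ ^+ 2); lra.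
lra.
Qed.

Definition lorentz_skew (p q r : R) : 'M[R]_3 :=
  \matrix_(i, j) nth 0 (nth [::] [:: [:: 0; p; q]; [:: p; 0; r]; [:: q; - r; 0]] i) j.

Lemma eta_skewE M : skew_op eta_mx M -> M = lorentz_skew (M 0 1) (M 0 2) (M 1 2).
Proof.
move=> M_skew.
have E i j : gform eta_mx (delta_mx i 0) (M *m delta_mx j 0) =
             - gform eta_mx (M *m delta_mx i 0) (delta_mx j 0) by apply: M_skew.
move: (E 0 0) (E 1 1) (E 2 2) (E 0 1) (E 0 2) (E 1 2).
rewrite !gform_etaE !mxE !sum3E !mxE /= => E00 E11 E22 E01 E02 E12.
by apply/matrixP => i j; rewrite mxE; case: (ord3P i) => ->; case: (ord3P j) => -> /=; lra.
Qed.

Section LorentzSkew.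
Variables p q r : R.
Local Notation L := (lorentz_skew p q r).

Lemma mulmx_lorentz_skewE x :
  L *m x = \col_i nth 0 [:: p * x 1 0 + q * x 2 0;
                            p * x 0 0 + r * x 2 0;
                            q * x 0 0 - r * x 1 0] i.
Proof.
apply/matrixP => i j; rewrite (ord1 j) !mxE sum3E !mxE.
by case: (ord3P i) => -> /=; ring.
Qed.

Lemma mxtrace_lorentz_skew_sqr : \tr (L *m L) = 2 * (p ^+ 2 + q ^+ 2 - r ^+ 2).
Proof. by rewrite /mxtrace sum3E !mxE !sum3E !mxE /=; ring. Qed.

Lemma lorentz_skew_cube : L *m L *m L = (p ^+ 2 + q ^+ 2 - r ^+ 2) *: L.
Proof.
apply/matrixP => i j; rewrite !mxE !sum3E !mxE !sum3E !mxE.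
by case: (ord3P i) => ->; case: (ord3P j) => -> /=; ring.
Qed.

(* Lagrange's identity for the Lorentzian cross product: L is the cross
   product with a vector f such that g(f, x) = r x0 + p x2 - q x1 and
   g(f, f) = p^2 + q^2 - r^2. *)
Lemma gform_lorentz_skew x :
  gform eta_mx (L *m x) (L *m x) =
  (r * x 0 0 + p * x 2 0 - q * x 1 0) ^+ 2 + (r ^+ 2 - p ^+ 2 - q ^+ 2) * gform eta_mx x x.
Proof. by rewrite mulmx_lorentz_skewE !gform_etaE !mxE /=; ring. Qed.

Lemma lorentz_skew_null_vector :
  L != 0 -> exists2 x, gform eta_mx x x = 0 & 0 < gform eta_mx (L *m x) (L *m x).
Proof.
move=> L_neq0.
suff [c [s [cs1 lin_neq0]]] : exists c s : R, c ^+ 2 + s ^+ 2 = 1 /\ r + p * s - q * c != 0.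
  exists (\col_i nth 0 [:: 1; c; s] i); first by rewrite gform_etaE !mxE /=; nra.
  rewrite gform_lorentz_skew gform_etaE !mxE /=.
  have -> : - (1 * 1) + c * c + s * s = 0 by nra.
  by rewrite mulr0 addr0 mulr1 exprn_even_gt0.
have [rq|] := eqVneq (r - q) 0;
  last by exists 1, 0; split; [ring | rewrite mulr0 mulr1 addr0].
have [rq'|] := eqVneq (r + q) 0;
  last by exists (-1), 0; split; [ring | rewrite mulr0 mulrN1 addr0 opprK].
have [rp|] := eqVneq (r + p) 0;
  last by exists 0, 1; split; [ring | rewrite mulr0 mulr1 subr0].
have [rp'|] := eqVneq (r - p) 0;
  last by exists 0, (-1); split; [ring | rewrite mulr0 mulrN1 subr0].
have [p0 q0 r0] : [/\ p = 0, q = 0 & r = 0] by split; lra.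
case/negP: L_neq0; rewrite p0 q0 r0; apply/eqP/matrixP => i j; rewrite !mxE.
by case: (ord3P i) => ->; case: (ord3P j) => -> /=; rewrite ?oppr0.
Qed.
End LorentzSkew.
End Minkowski.

Definition basis_mx (R : realType) (e : 'I_3 -> 'cV[R]_3) : 'M[R]_3 :=
  \matrix_(i < 3, j < 3) e j i 0.

Section OrthonormalBasis.
Variables (R : realType) (G : 'M[R]_3) (e : 'I_3 -> 'cV[R]_3).
Hypothesis e_on : forall i j, gform G (e i) (e j) = Defs.eta R i j.
Local Notation P := (basis_mx e).

Lemma basis_mx_gram : P^T *m G *m P = eta_mx R.
Proof.
apply/matrixP => i j; rewrite [RHS]mxE -e_on /gform !mxE.
apply: eq_bigr => k _; rewrite !mxE; congr (_ * _).
by apply: eq_bigr => l _; rewrite !mxE.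
Qed.

Lemma gform_basis_mx x y : gform G (P *m x) (P *m y) = gform (eta_mx R) x y.
Proof. by rewrite /gform -basis_mx_gram trmx_mul !mulmxA. Qed.

Lemma basis_mx_unit : P \in unitmx.
Proof.
have /mulmx1_unit[] : (eta_mx R *m P^T *m G) *m P = 1%:M.
  by rewrite -!mulmxA (mulmxA _ G) basis_mx_gram eta_mx_sqr.
by [].
Qed.

Lemma timelike_gform_neq0 x y : timelike G x -> timelike G y -> gform G x y != 0.
Proof.
rewrite /timelike -(mulKVmx basis_mx_unit x) -(mulKVmx basis_mx_unit y).
rewrite !gform_basis_mx; exact: eta_timelike_gform_neq0.
Qed.

Section Skew.
Variables (F : 'M[R]_3) (F_skew : skew_op G F).
Let M := invmx P *m F *m P.

Let FP : F *m P = P *m M.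
Proof. by rewrite /M !mulmxA mulmxV ?basis_mx_unit // mul1mx. Qed.

Let FE : F = P *m M *m invmx P.
Proof. by rewrite -FP mulmxK ?basis_mx_unit. Qed.

Lemma skew_op_basis_mx : skew_op (eta_mx R) M.
Proof. by move=> x y; rewrite -!gform_basis_mx !(mulmxA P M) -FP -!mulmxA F_skew. Qed.

Lemma skew_op_cube : F *m F *m F = (1 / 2 * \tr (F *m F)) *: F.
Proof.
have M_lorentz := eta_skewE skew_op_basis_mx.
have F3 : F *m F *m F = P *m (M *m M *m M) *m invmx P.
  by rewrite [in LHS]FE !mulmxA !mulmxKV ?basis_mx_unit.
have trF2 : \tr (F *m F) = \tr (M *m M).
  rewrite FE !mulmxA mulmxKV ?basis_mx_unit // mxtrace_mulC.
  by rewrite !mulmxA mulVmx ?basis_mx_unit // mul1mx.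
rewrite F3 trF2 M_lorentz lorentz_skew_cube mxtrace_lorentz_skew_sqr -M_lorentz.
by rewrite -scalemxAr -scalemxAl -FE; congr (_ *: _); field.
Qed.

Lemma skew_op_null_vector :
  F != 0 -> exists2 u, gform G u u = 0 & 0 < gform G (F *m u) (F *m u).
Proof.
move=> F_neq0; have M_lorentz := eta_skewE skew_op_basis_mx.
have M_neq0 : M != 0 by apply: contraNneq F_neq0; rewrite FE => ->; rewrite mulmx0 mul0mx.
rewrite M_lorentz in M_neq0.
have [x x_null Mx_pos] := lorentz_skew_null_vector M_neq0.
exists (P *m x); first by rewrite gform_basis_mx.
by rewrite mulmxA FP -mulmxA gform_basis_mx M_lorentz.
Qed.
End Skew.
End OrthonormalBasis.

Theorem corollary2p3 (R : realType) (G : 'M[R]_3) (tau : 'cV[R]_3)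
  (F : 'M[R]_3) :
  lorentzian3 G -> timelike G tau -> skew_op G F -> F != 0 ->
  let sigma := - (1 / 2) * mxtrace (F *m F) in
  exists e : 'I_3 -> 'cV[R]_3,
    orthonormal_basis G e /\ future_directed G tau (e 0) /\
    F *m e 0 = (-1 + sigma / 4) *: e 2 /\
    F *m e 1 = - (1 + sigma / 4) *: e 2 /\
    F *m e 2 = (-1 + sigma / 4) *: e 0 + (1 + sigma / 4) *: e 1.
Proof.
move=> [G_sym [e' [_ e'_on]]] tau_tl F_skew F_neq0 sigma.
have F_cube : F *m F *m F = - sigma *: F.
  by rewrite (skew_op_cube e'_on F_skew) /sigma mulNr opprK.
have [u u_null Fu_pos] := skew_op_null_vector e'_on F_skew F_neq0.
have gram := gform_normal_frame G_sym F_skew F_cube u_null.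
have e0_scale := gform_normal_frame0 G F sigma u.
set e := normal_frame F sigma u in gram e0_scale *.
set K := gform G (F *m u) (F *m u) in Fu_pos gram.
have e0_tl : timelike G (e 1 0).
  by rewrite /timelike gram /Defs.eta /= expr1n mul1r mulrN1 oppr_lt0 mulr_gt0.
have [mu mu_norm mu_neg] :
    exists2 mu : R, mu ^+ 2 * (16 * K) = 1 & mu * gform G (e 1 0) tau < 0.
  by apply: exists_normalizing_scale; [rewrite mulr_gt0 | exact: (timelike_gform_neq0 e'_on)].
have e_on i j : gform G (e mu i) (e mu j) = Defs.eta R i j by rewrite gram mu_norm mul1r.
have [F_e0 F_e1 F_e2] := mul_normal_frame u F_cube mu.
exists (e mu); split; [split | split; [split|]] => //.
- exact: basis_mx_unit e_on.
- by rewrite /timelike e_on /Defs.eta /= ltrN10.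
- by rewrite e0_scale.
Qed.
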